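(* Let $A=\bigoplus_{m\in\omega_M}A_m\chi^m$ be an effectively $M$-graded affine $\mathbf k$-algebra with weight cone $\omega$, and let $\partial_1,\partial_2$ be homogeneous locally nilpotent derivations of $A$ of degrees $e_1,e_2\in M$ respectively (of arbitrary, not necessarily fiber, type). If the line $\{te_1+(1-t)e_2 : t\in\mathbb Q\}\subseteq M_{\mathbb Q}$ does not intersect the weight cone $\omega$, then $\partial_1+\partial_2$ is locally nilpotent.
   Context: $\mathbf k$ is an algebraically closed field of characteristic zero, $M$ a lattice, $M_{\mathbb Q}=M\otimes\mathbb Q$; $A$ is a finitely generated commutative $\mathbf k$-domain with an effective $M$-grading; the weight cone $\omega\subseteq M_{\mathbb Q}$ is the cone spanned by $\{m\in M:A_m\neq0\}$ and $\omega_M=\omega\cap M$. A derivation $\partial$ is homogeneous of degree $e$ if it maps the degree-$m$ component into the degree-$(m+e)$ component for all $m$; it is locally nilpotent if every element is killed by some power of $\partial$. *)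

From HB Require Import structures.
From mathcomp Require Import all_boot all_order all_algebra all_field.
Set Implicit Arguments. Unset Strict Implicit. Unset Printing Implicit Defensive.
Import Order.TTheory GRing.Theory Num.Theory.
Local Open Scope ring_scope.

(* The lattice M is modelled as Z^n = 'rV[int]_n, and M_Q as 'rV[rat]_n. *)
Definition lat (n : nat) := 'rV[int]_n.
Definition toQ (n : nat) (m : 'rV[int]_n) : 'rV[rat]_n := map_mx intr m.

(* A grading of A by M: a family of k-subspaces Ag m (membership predicates). *)
Definition is_subspace (k : fieldType) (A : lmodType k) (S : A -> Prop) :=
  S 0 /\ forall (c : k) (a b : A), S a -> S b -> S (c *: a + b).

Definition is_M_grading (k : fieldType) (A : comAlgType k) (n : nat)
    (Ag : 'rV[int]_n -> A -> Prop) : Prop :=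
  [/\ (forall m, is_subspace (Ag m)),
      (forall a : A, exists (s : seq 'rV[int]_n) (f : 'rV[int]_n -> A),
          (forall m, m \in s -> Ag m (f m)) /\ a = \sum_(m <- s) f m),
      (forall (s : seq 'rV[int]_n) (f : 'rV[int]_n -> A),
          uniq s -> (forall m, m \in s -> Ag m (f m)) ->
          \sum_(m <- s) f m = 0 -> forall m, m \in s -> f m = 0) &
      (forall m m' a b, Ag m a -> Ag m' b -> Ag (m + m') (a * b))].

Definition is_weight (k : fieldType) (A : comAlgType k) (n : nat)
    (Ag : 'rV[int]_n -> A -> Prop) (m : 'rV[int]_n) : Prop :=
  exists a : A, Ag m a /\ a <> 0.

Definition effective_grading (k : fieldType) (A : comAlgType k) (n : nat)
    (Ag : 'rV[int]_n -> A -> Prop) : Prop :=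
  forall x : 'rV[int]_n, exists (s : seq 'rV[int]_n) (c : 'rV[int]_n -> int),
    (forall m, m \in s -> is_weight Ag m) /\ x = \sum_(m <- s) c m *: m.

Definition in_weight_cone (k : fieldType) (A : comAlgType k) (n : nat)
    (Ag : 'rV[int]_n -> A -> Prop) (x : 'rV[rat]_n) : Prop :=
  exists (s : seq 'rV[int]_n) (c : 'rV[int]_n -> rat),
    (forall m, m \in s -> is_weight Ag m /\ 0 <= c m) /\
    x = \sum_(m <- s) c m *: toQ m.

Definition is_subalgebra (k : fieldType) (A : comAlgType k) (S : A -> Prop) :=
  [/\ S 1, (forall (c : k) a, S a -> S (c *: a)),
      (forall a b, S a -> S b -> S (a + b)) &
      (forall a b, S a -> S b -> S (a * b))].

Definition finitely_generated (k : fieldType) (A : comAlgType k) : Prop :=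
  exists gens : seq A, forall S : A -> Prop, is_subalgebra S ->
    (forall g, g \in gens -> S g) -> forall a, S a.

Definition is_domain (R : comNzRingType) : Prop :=
  forall a b : R, a * b = 0 -> a = 0 \/ b = 0.

Definition is_derivation (k : fieldType) (A : comAlgType k) (d : A -> A) :=
  (forall (c : k) a b, d (c *: a + b) = c *: d a + d b) /\
  (forall a b, d (a * b) = a * d b + d a * b).

Definition homogeneous_of_degree (k : fieldType) (A : comAlgType k) (n : nat)
    (Ag : 'rV[int]_n -> A -> Prop) (d : A -> A) (e : 'rV[int]_n) : Prop :=
  forall m a, Ag m a -> Ag (m + e) (d a).

Definition locally_nilpotent (R : zmodType) (d : R -> R) : Prop :=
  forall a, exists N : nat, iter N d a = 0.

From HB Require Import structures.
From mathcomp Require Import all_boot all_order all_algebra all_field.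
From mathcomp Require Import ring lra.

Import Order.TTheory GRing.Theory Num.Theory.
Local Open Scope ring_scope.

(* Idea: a linear form separating the line from the weight cone makes
   d1 + d2 strictly lower a degree that is nonnegative on all of A.

   Farkas' lemma for finitely generated cones
      (by Fourier-Motzkin elimination of one generator at a time) gives,
      for a finite set s of vectors and a line u1 u2 disjoint from cone(s),
      a form y with y(u1) = y(u2) < 0 and y >= 0 on s.
   2. Graded algebras.  Since A is finitely generated, the
      weight cone is generated by finitely many weights.
   3. Nilpotence.  If val is a degree function, nonnegative on weights,
      and an additive map d lowers val by at least some fixed amount, then
      iterating d drives every element to val-degree < 0, hence to 0.
   The theorem applies 1 to the finitely many generating weights and then
   3 to d1 + d2 with val := y, which is lowered by -y(e1) = -y(e2) > 0. *)

Lemma all_behead {T : eqType} {P : T -> Prop} {x s} :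
  (forall y, y \in x :: s -> P y) -> forall y, y \in s -> P y.
Proof. by move=> Ps y ys; apply: Ps; rewrite in_cons ys orbT. Qed.

Section Cones.
Variable n : nat.
Implicit Types (u v w x y z : 'rV[rat]_n) (s : seq 'rV[rat]_n).

Definition dot u v : rat := \sum_(i < n) u 0 i * v 0 i.

Lemma dotC u v : dot u v = dot v u.
Proof. by apply: eq_bigr => i _; rewrite mulrC. Qed.

Lemma dotDr u v w : dot u (v + w) = dot u v + dot u w.
Proof. by rewrite /dot -big_split; apply: eq_bigr => i _; rewrite mxE mulrDr. Qed.

Lemma dotZr u c v : dot u (c *: v) = c * dot u v.
Proof. by rewrite /dot mulr_sumr; apply: eq_bigr => i _; rewrite mxE; ring. Qed.

Lemma dot0r u : dot u 0 = 0.
Proof. by rewrite -(scale0r 0) dotZr mul0r. Qed.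

Lemma dotNr u v : dot u (- v) = - dot u v.
Proof. by rewrite -scaleN1r dotZr mulN1r. Qed.

Lemma dotBr u v w : dot u (v - w) = dot u v - dot u w.
Proof. by rewrite dotDr dotNr. Qed.

Lemma dotBl u v w : dot (v - w) u = dot v u - dot w u.
Proof. by rewrite dotC dotBr !(dotC u). Qed.

Lemma dotZl u c v : dot (c *: v) u = c * dot v u.
Proof. by rewrite dotC dotZr dotC. Qed.

(* Positive definiteness: the base case of Farkas' lemma separates b from
   the zero cone by the form -b. *)
Lemma dot_gt0 v : v != 0 -> 0 < dot v v.
Proof.
have sq_ge0 i : 0 <= v 0 i * v 0 i by rewrite -expr2 sqr_ge0.
move=> v0; rewrite lt0r sumr_ge0 ?andbT => [|i _ //].
apply: contra v0 => /eqP /psumr_eq0P vv0; apply/eqP/rowP => j.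
by have /eqP := vv0 (fun i _ => sq_ge0 i) j isT; rewrite mulf_eq0 orbb mxE => /eqP.
Qed.

Definition incone s x :=
  exists l : seq (rat * 'rV[rat]_n),
    (forall p, p \in l -> 0 <= p.1 /\ p.2 \in s) /\ x = \sum_(p <- l) p.1 *: p.2.

Lemma incone0 s : incone s 0.
Proof. by exists [::]; rewrite big_nil. Qed.

Lemma incone_mem s w : w \in s -> incone s w.
Proof.
move=> ws; exists [:: (1, w)]; rewrite big_seq1 scale1r; split=> // p.
by rewrite inE => /eqP ->.
Qed.

Lemma incone_add s x y : incone s x -> incone s y -> incone s (x + y).
Proof.
move=> [l1 [H1 ->]] [l2 [H2 ->]]; exists (l1 ++ l2); rewrite big_cat; split=> // p.
by rewrite mem_cat => /orP [/H1 | /H2].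
Qed.

Lemma incone_scale s c x : 0 <= c -> incone s x -> incone s (c *: x).
Proof.
move=> c0 [l [Hl ->]]; exists [seq (c * p.1, p.2) | p <- l]; split.
  by move=> _ /mapP [p /Hl [p0 ps] ->]; rewrite mulr_ge0.
by rewrite big_map scaler_sumr; apply: eq_bigr => p _; rewrite scalerA.
Qed.

Lemma incone_sub {s s' x} : {subset s <= s'} -> incone s x -> incone s' x.
Proof. by move=> ss' [l [Hl ->]]; exists l; split=> // p /Hl [? /ss']. Qed.

Lemma incone_cons a s x : incone (a :: s) x ->
  exists t v, [/\ 0 <= t, incone s v & x = t *: a + v].
Proof.
move=> [l [Hl ->]]; elim: l Hl => [|p l IH] Hl.
  by exists 0, 0; rewrite big_nil scale0r addr0; split=> //; apply: incone0.
rewrite big_cons; have [t [v [t0 vs ->]]] := IH (all_behead Hl).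
have [p0] := Hl p (mem_head _ _); rewrite in_cons => /orP [/eqP pa | ps].
  exists (p.1 + t), v; split; [exact: addr_ge0 | by [] | by rewrite pa scalerDl addrA].
exists t, (p.1 *: p.2 + v); split=> //; last by rewrite addrCA.
by apply: incone_add => //; apply: incone_scale => //; apply: incone_mem.
Qed.

Lemma incone_map (T : eqType) (g : T -> 'rV[rat]_n) (r : seq T) x :
  incone (map g r) x -> exists l : seq (rat * T),
    (forall p, p \in l -> 0 <= p.1 /\ p.2 \in r) /\ x = \sum_(p <- l) p.1 *: g p.2.
Proof.
move=> [l [Hl ->]]; elim: l Hl => [|p l IH] Hl.
  by exists [::]; rewrite !big_nil.
rewrite big_cons; have [l' [Hl' ->]] := IH (all_behead Hl).
have [p0 /mapP [t tr ->]] := Hl p (mem_head _ _).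
exists ((p.1, t) :: l'); rewrite big_cons; split=> // q.
by rewrite in_cons => /orP [/eqP -> | /Hl'].
Qed.

Lemma dot_incone_ge0 {s y x} :
  (forall w, w \in s -> 0 <= dot y w) -> incone s x -> 0 <= dot y x.
Proof.
move=> ys [l [Hl ->]]; elim: l Hl => [|p l IH] Hl.
  by rewrite big_nil dot0r.
have [p0 ps] := Hl p (mem_head _ _).
rewrite big_cons dotDr dotZr; apply: addr_ge0; first exact: mulr_ge0 p0 (ys _ ps).
exact: IH (all_behead Hl).
Qed.

(* Up to the factor -dot y a, the projection of w onto the hyperplane
   y = 0 along a; it eliminates the generator a in Fourier-Motzkin. *)
Definition proj_along y a w := dot y w *: a - dot y a *: w.

Lemma proj_along_linear y a c v w :
  proj_along y a (c *: v + w) = c *: proj_along y a v + proj_along y a w.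
Proof.
by apply/rowP => j; rewrite /proj_along dotDr dotZr !mxE; ring.
Qed.

(* The forms on the projected vectors pull back to forms on the original
   vectors that vanish on a. *)
Lemma dot_proj_along y a z w :
  dot (dot z a *: y - dot y a *: z) w = dot z (proj_along y a w).
Proof. by rewrite dotBl !dotZl /proj_along dotBr !dotZr mulrC. Qed.

Lemma incone_proj_along {s a b y} :
  (forall w, w \in s -> 0 <= dot y w) -> dot y b < 0 -> dot y a < 0 ->
  incone (map (proj_along y a) s) (proj_along y a b) -> incone (a :: s) b.
Proof.
move=> ys yb ya /incone_map [l [Hl Hb]].
pose v := \sum_(p <- l) p.1 *: p.2.
have vs : incone s v by exists l.
have proj_v : proj_along y a b = proj_along y a v.
  rewrite Hb /v; elim: (l) => [|p l' IH]; last by rewrite !big_cons IH proj_along_linear.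
  by rewrite !big_nil /proj_along dot0r scale0r scaler0 subr0.
have yv := dot_incone_ge0 ys vs.
have -> : b = ((dot y b - dot y v) / dot y a) *: a + v.
  apply/rowP => j; move/rowP/(_ j): proj_v; rewrite /proj_along !mxE => bv.
  apply: (mulfI (ltr0_neq0 ya)); rewrite mulrDr mulrA mulrCA divff ?ltr0_neq0 //.
  by rewrite mulr1 [_ * b 0 j]mulrC; lra.
apply: incone_add; last exact: incone_sub (@mem_behead _ (a :: s)) vs.
by apply: incone_scale; [rewrite ler_ndivlMr //; lra | apply: incone_mem; rewrite mem_head].
Qed.

Lemma farkas {s b} : ~ incone s b ->
  exists y, (forall w, w \in s -> 0 <= dot y w) /\ dot y b < 0.
Proof.
move: {2}(size s) (leqnn (size s)) => k; elim: k s b => [|k IH] s b.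
  rewrite leqn0 => /nilP -> bs; exists (- b); split=> //.
  rewrite dotC dotNr oppr_lt0 dot_gt0 //.
  by apply/eqP => b0; apply: bs; rewrite b0; exact: incone0.
case: s => [|a s] /= sk bs; first exact: IH.
have [y [ys yb]] : exists y, (forall w, w \in s -> 0 <= dot y w) /\ dot y b < 0.
  by apply: IH => // /(incone_sub (@mem_behead _ (a :: s))).
have [ya | ya] := lerP 0 (dot y a).
  by exists y; split=> // w; rewrite in_cons => /orP [/eqP -> | /ys].
have [z [zs zb]] : exists z, (forall w, w \in map (proj_along y a) s -> 0 <= dot z w)
    /\ dot z (proj_along y a b) < 0.
  by apply: IH; [rewrite size_map | move/(incone_proj_along ys yb ya)].
exists (dot z a *: y - dot y a *: z); rewrite dot_proj_along; split=> // w.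
rewrite in_cons dot_proj_along => /orP [/eqP -> | ws]; last exact/zs/map_f.
by rewrite /proj_along subrr dot0r.
Qed.

Lemma line_separation s u1 u2 :
  (forall t : rat, ~ incone s (t *: u1 + (1 - t) *: u2)) ->
  exists y, [/\ dot y u1 = dot y u2, dot y u2 < 0 &
                forall w, w \in s -> 0 <= dot y w].
Proof.
move=> line_out; pose f := u1 - u2.
have u2_out : ~ incone [:: f, - f & s] u2.
  case/incone_cons=> t1 [_ [_ /incone_cons [t2 [v [_ vs ->]]] u2E]].
  apply: (line_out (t2 - t1)); suff -> : (t2 - t1) *: u1 + (1 - (t2 - t1)) *: u2 = v by [].
  apply/rowP => j; move/rowP/(_ j): u2E; rewrite /f !mxE => u2j.
  have -> : v 0 j = u2 0 j - t1 * (u1 0 j - u2 0 j) + t2 * (u1 0 j - u2 0 j).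
    by rewrite {1}u2j; ring.
  by ring.
have [y [ys yu2]] := farkas u2_out.
have yf : dot y f = 0.
  have := ys (- f); rewrite dotNr !inE eqxx orbT => /(_ isT).
  by have := ys f (mem_head _ _); lra.
exists y; split=> [|//|w ws]; last by apply: ys; rewrite !in_cons ws !orbT.
by move/eqP: yf; rewrite dotBr subr_eq0 => /eqP.
Qed.

End Cones.
Arguments dot {n}.
Arguments incone {n}.

Lemma regroup (K : eqType) (V W : zmodType) (P : K -> V -> Prop) (F : K -> V -> W) :
  (forall m x y, P m x -> P m y -> P m (x + y)) ->
  (forall m x y, F m (x + y) = F m x + F m y) ->
  forall l : seq (K * V), (forall p, p \in l -> P p.1 p.2) ->
  exists s (f : K -> V), [/\ uniq s,
     (forall m, m \in s -> P m (f m) /\ m \in map fst l) &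
     \sum_(m <- s) F m (f m) = \sum_(p <- l) F p.1 p.2].
Proof.
move=> PD FD; elim=> [|p l IH] Hl.
  by exists [::], (fun _ => 0); split=> //; rewrite !big_nil.
have [s [f [s_uniq Hs Hsum]]] := IH (all_behead Hl).
have Pp := Hl p (mem_head _ _).
have out_p m : m \in s -> p.1 \notin s -> (m == p.1) = false.
  by move=> ms ps; apply/negbTE; apply: contraNneq ps => <-.
have [ps | ps] := boolP (p.1 \in s).
  exists s, (fun m => if m == p.1 then p.2 + f m else f m); split=> //.
    move=> m ms; have [Pm lm] := Hs m ms; rewrite /= in_cons lm orbT.
    by case: eqP => [-> | _]; split=> //; apply: PD => //; exact: (Hs _ ps).1.
  rewrite (bigD1_seq p.1) //= eqxx FD big_cons -Hsum (bigD1_seq p.1 ps s_uniq) /=.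
  by rewrite -addrA; congr (_ + (_ + _)); apply: eq_bigr => m /negbTE ->.
exists (p.1 :: s), (fun m => if m == p.1 then p.2 else f m); split.
- by rewrite cons_uniq ps s_uniq.
- move=> m; rewrite in_cons => /orP [/eqP -> | ms]; first by rewrite eqxx /= mem_head.
  by have [Pm lm] := Hs m ms; rewrite out_p //= in_cons lm orbT.
- by rewrite !big_cons eqxx -Hsum; congr (_ + _); apply: eq_big_seq => m /out_p ->.
Qed.

Lemma derivation_additive {k : fieldType} {A : comAlgType k} {d : A -> A} :
  is_derivation d -> {morph d : x y / x + y}.
Proof. by move=> [dlin _] x y; have := dlin 1 x y; rewrite !scale1r. Qed.

Section HomogeneousSums.
Context {k : fieldType} {A : comAlgType k} {n : nat}.
Context {Ag : 'rV[int]_n -> A -> Prop}.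
Hypothesis hgr : is_M_grading Ag.

Lemma grade_lin m c x y : Ag m x -> Ag m y -> Ag m (c *: x + y).
Proof. by case: hgr => sub _ _ _; case: (sub m) => _; apply. Qed.

Lemma grade0 m : Ag m 0.
Proof. by case: hgr => sub _ _ _; case: (sub m). Qed.

Lemma grade_scale m c x : Ag m x -> Ag m (c *: x).
Proof. by move=> hx; rewrite -[_ *: x]addr0; apply: grade_lin => //; apply: grade0. Qed.

Definition homsum (P : 'rV[int]_n -> Prop) (a : A) :=
  exists l : seq ('rV[int]_n * A),
    (forall p, p \in l -> Ag p.1 p.2 /\ P p.1) /\ a = \sum_(p <- l) p.2.

Implicit Types P Q : 'rV[int]_n -> Prop.

Lemma homsum0 P : homsum P 0.
Proof. by exists [::]; rewrite big_nil. Qed.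

Lemma homsum_hom {P m a} : Ag m a -> P m -> homsum P a.
Proof.
by move=> ha Pm; exists [:: (m, a)]; rewrite big_seq1; split=> // p; rewrite inE => /eqP ->.
Qed.

Lemma homsum_add {P a b} : homsum P a -> homsum P b -> homsum P (a + b).
Proof.
move=> [l1 [H1 ->]] [l2 [H2 ->]]; exists (l1 ++ l2); rewrite big_cat; split=> // p.
by rewrite mem_cat => /orP [/H1 | /H2].
Qed.

Lemma homsum_mono {P Q a} : (forall m, P m -> Q m) -> homsum P a -> homsum Q a.
Proof. by move=> PQ [l [Hl ->]]; exists l; split=> // p /Hl [? /PQ]. Qed.

Lemma homsum_map {P Q} {d : A -> A} {a} : {morph d : x y / x + y} ->
  (forall m b, Ag m b -> P m -> homsum Q (d b)) -> homsum P a -> homsum Q (d a).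
Proof.
move=> dD dPQ [l [Hl ->]]; elim: l Hl => [|p l IH] Hl.
  rewrite big_nil; have -> : d 0 = 0 by apply: (addrI (d 0)); rewrite -dD !addr0.
  exact: homsum0.
have [Ap Pp] := Hl p (mem_head _ _); rewrite big_cons dD.
by apply: homsum_add; [exact: dPQ Ap Pp | exact: IH (all_behead Hl)].
Qed.

Lemma homsum_subalgebra {P} : homsum P 1 ->
  (forall m m', P m -> P m' -> P (m + m')) -> is_subalgebra (homsum P).
Proof.
move=> P1 PD; split=> //; last 2 first.
- by move=> a b; apply: homsum_add.
- move=> a b [l1 [H1 ->]] [l2 [H2 ->]].
  exists [seq (p.1 + q.1, p.2 * q.2) | p <- l1, q <- l2]; split.
    move=> _ /allpairsP [[p q] [/H1 [Ap Pp] /H2 [Aq Pq] ->]]; split; last exact: PD.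
    by case: hgr => _ _ _; apply.
  rewrite big_allpairs_dep mulr_suml; apply: eq_bigr => p _.
  by rewrite mulr_sumr; apply: eq_bigr.
move=> c a [l [Hl ->]]; exists [seq (p.1, c *: p.2) | p <- l]; split.
  by move=> _ /mapP [p /Hl [Ap Pp] ->]; split=> //; apply: grade_scale.
by rewrite big_map scaler_sumr.
Qed.

Lemma homsum_weights (L : seq A) : exists W : seq 'rV[int]_n,
  (forall m, m \in W -> is_weight Ag m) /\
  forall a, a \in L -> homsum (fun m => m \in W) a.
Proof.
elim: L => [|a L [W [HW HL]]]; first by exists [::].
have [s [f [Af aE]]] := (let: And4 _ dec _ _ := hgr in dec) a.
pose Wa := [seq m <- s | f m != 0].
exists (Wa ++ W); split.
  move=> m; rewrite mem_cat => /orP [| /HW //].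
  by rewrite mem_filter => /andP [fm0 ms]; exists (f m); split; [apply: Af | apply/eqP].
move=> b; rewrite in_cons => /orP [/eqP -> | bL]; last first.
  by apply: homsum_mono (HL b bL) => m; rewrite mem_cat orbC => ->.
exists [seq (m, f m) | m <- Wa]; split.
  move=> _ /mapP [m + ->]; rewrite mem_filter => /andP [fm0 ms]; split; first exact: Af.
  by rewrite /= mem_cat mem_filter fm0 ms.
rewrite aE big_map big_filter [RHS]big_mkcond; apply: eq_bigr => m _ /=.
by case: eqP => [->|].
Qed.

Lemma homsum_degree {P m a} : homsum P a -> Ag m a -> a != 0 -> P m.
Proof.
move=> [l [Hl aE]] Ama a0.
have PAD m' x y : Ag m' x /\ P m' -> Ag m' y /\ P m' -> Ag m' (x + y) /\ P m'.
  by move=> [Ax Pm'] [Ay _]; split=> //; rewrite -[x]scale1r; apply: grade_lin.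
have [s [f [s_uniq Hs Hsum]]] :=
  @regroup _ A A (fun m x => Ag m x /\ P m) (fun _ x => x) PAD (fun _ _ _ => erefl) l Hl.
have [/Hs [[_ //]] | ms] := boolP (m \in s).
case/negP: a0; case: hgr => _ _ direct _.
pose g m' := if m' == m then - a else f m'.
have g0 : forall m', m' \in m :: s -> g m' = 0.
  apply: direct => [|m'|]; first by rewrite cons_uniq ms s_uniq.
    rewrite in_cons /g; case: eqP => [-> _ | _ /= /Hs [[] //]].
    by rewrite -scaleN1r; apply: grade_scale.
  rewrite big_cons {1}/g eqxx.
  have -> : \sum_(m' <- s) g m' = \sum_(m' <- s) f m'.
    by apply: eq_big_seq => m' m's; rewrite /g; case: eqP m's => // ->; rewrite (negbTE ms).
  by rewrite Hsum -aE addNr.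
by have := g0 m (mem_head _ _); rewrite /g eqxx => /eqP; rewrite oppr_eq0.
Qed.

Lemma homsum_zero {P a} : (forall m, P m -> ~ is_weight Ag m) -> homsum P a -> a = 0.
Proof.
move=> Pnw [l [Hl ->]]; rewrite big_seq big1 // => p /Hl [Ap /Pnw nw].
by case: (eqVneq p.2 0) => // p0; case: nw; exists p.2; split=> //; apply/eqP.
Qed.

(* The weight cone of a finitely generated graded algebra is generated by
   finitely many weights: those occurring in the generators. *)
Lemma weights_in_cone : finitely_generated A -> exists W : seq 'rV[int]_n,
  (forall m, m \in W -> is_weight Ag m) /\
  forall m, is_weight Ag m -> incone (map (@toQ n) W) (toQ m).
Proof.
move=> [gens gens_gen].
have [W [HW HL]] := homsum_weights (1 :: gens).
exists W; split=> // m [a [Ama /eqP a0]].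
pose P m := incone (map (@toQ n) W) (toQ m).
have PW : forall m, m \in W -> P m by move=> m' /(map_f (@toQ n)) /incone_mem.
have PD m1 m2 : P m1 -> P m2 -> P (m1 + m2).
  by rewrite /P /toQ map_mxD; apply: incone_add.
have sub := homsum_subalgebra (homsum_mono PW (HL 1 (mem_head _ _))) PD.
apply: (homsum_degree (P := P) _ Ama a0); apply: gens_gen => // g gg.
by apply: homsum_mono PW _; apply: HL; rewrite in_cons gg orbT.
Qed.

Lemma in_weight_cone_incone {W : seq 'rV[int]_n} {x} :
  (forall m, m \in W -> is_weight Ag m) -> incone (map (@toQ n) W) x ->
  in_weight_cone Ag x.
Proof.
move=> HW /incone_map [l [Hl ->]].
have [|s [c [_ Hs Hsum]]] := @regroup _ rat _ (fun _ c => 0 <= c)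
    (fun m c => c *: toQ m) (fun _ x y => @addr_ge0 _ x y) (fun m x y => scalerDl _ x y)
    [seq (p.2, p.1) | p <- l].
  by move=> _ /mapP [p /Hl [p0 _] ->].
exists s, c; rewrite Hsum big_map; split=> // m /Hs [c0 /mapP [_ /mapP [p /Hl [_ pW] ->] mE]].
by split; rewrite // mE; apply: HW.
Qed.

Context {val : 'rV[int]_n -> rat}.
Hypothesis val_weight : forall m, is_weight Ag m -> 0 <= val m.

Lemma homsum_bounded a : exists T, homsum (fun m => val m <= T) a.
Proof.
have [W [_ /(_ a (mem_head _ _)) aW]] := homsum_weights [:: a].
exists (\sum_(m <- W) `|val m|); apply: homsum_mono aW => m.
elim: W => [|m' W IH] //; rewrite in_cons big_cons => /orP [/eqP -> | mW].
  by rewrite (le_trans (ler_norm _)) // lerDl sumr_ge0.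
by rewrite (le_trans (IH mW)) // lerDr.
Qed.

(* An additive map lowering the val-degree by at least -c > 0 is locally
   nilpotent: after N steps all degrees are at most T + N c < 0. *)
Lemma lowering_locally_nilpotent {d : A -> A} {c : rat} : c < 0 ->
  {morph d : x y / x + y} ->
  (forall m a, Ag m a -> homsum (fun m' => val m' <= val m + c) (d a)) ->
  locally_nilpotent d.
Proof.
move=> c0 dD d_lowers a; have [T aT] := homsum_bounded a.
have iter_low N : homsum (fun m => val m <= T + N%:R * c) (iter N d a).
  elim: N => [|N IH]; first by rewrite mul0r addr0.
  apply: homsum_map dD _ IH => m b Amb mT; apply: homsum_mono (d_lowers m b Amb) => m'.
  by rewrite -natr1 mulrDl mul1r addrA; lra.
pose N := Num.bound (`|T| / - c); exists N.
have TN : T + N%:R * c < 0.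
  have c_pos : 0 < - c by rewrite oppr_gt0.
  have := archi_boundP (divr_ge0 (normr_ge0 T) (ltW c_pos)).
  rewrite -/N ltr_pdivrMr // mulrN; have := ler_norm T; lra.
by apply: homsum_zero (iter_low N) => m mN /val_weight; lra.
Qed.

End HomogeneousSums.

Theorem proposition6p3 (k : closedFieldType) (hchar : [pchar k] =i pred0)
    (A : comAlgType k) (n : nat) (Ag : 'rV[int]_n -> A -> Prop)
    (hfg : finitely_generated A) (hdom : is_domain A)
    (hgr : is_M_grading Ag) (heff : effective_grading Ag)
    (d1 d2 : A -> A) (e1 e2 : 'rV[int]_n)
    (hd1 : is_derivation d1) (hd2 : is_derivation d2)
    (hh1 : homogeneous_of_degree Ag d1 e1) (hh2 : homogeneous_of_degree Ag d2 e2)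
    (hl1 : locally_nilpotent d1) (hl2 : locally_nilpotent d2)
    (hline : forall t : rat, ~ in_weight_cone Ag (t *: toQ e1 + (1 - t) *: toQ e2)) :
  locally_nilpotent (fun a => d1 a + d2 a).
Proof.
have [W [HW Wcone]] := weights_in_cone hgr hfg.
have [y [y12 y2 yW]] : exists y, [/\ dot y (toQ e1) = dot y (toQ e2),
    dot y (toQ e2) < 0 & forall w, w \in map (@toQ n) W -> 0 <= dot y w].
  by apply: line_separation => t /(in_weight_cone_incone HW); apply: hline.
pose val m := dot y (toQ m).
have valD m m' : val (m + m') = val m + val m' by rewrite /val /toQ map_mxD dotDr.
have val_weight m : is_weight Ag m -> 0 <= val m.
  by move=> /Wcone; apply: dot_incone_ge0.
apply: (lowering_locally_nilpotent hgr val_weight y2).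
  by move=> a b; rewrite (derivation_additive hd1) (derivation_additive hd2) addrACA.
move=> m a Ama; apply: homsum_add.
  by apply: homsum_hom (hh1 _ _ Ama) _; rewrite valD /val y12.
by apply: homsum_hom (hh2 _ _ Ama) _; rewrite valD.
Qed.
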